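(* Let $A\in\mathbb{R}^{n\times n}$ with spectral radius $\rho(A)<1$, let $C\in\mathbb{R}^{m\times n}$, and let $Q\in\mathbb{R}^{n\times n}$, $R\in\mathbb{R}^{m\times m}$ be symmetric positive definite, with $(A,C)$ observable and $(A,Q^{1/2})$ controllable. Let $\bar P$ be the unique stabilizing positive definite solution of the discrete-time algebraic Riccati equation $$\bar P = A\bar PA^{\intercal}+Q-(A\bar PA^{\intercal}+Q)C^{\intercal}\big(C(A\bar PA^{\intercal}+Q)C^{\intercal}+R\big)^{-1}C(A\bar PA^{\intercal}+Q),$$ let $P^{OP}=L(A,Q)$ and $P_n=P^{OP}+\bar P$. Let $\gamma^e\in(0,1)$ and $\mu\in(0,1)$. Let $(\lambda^e_k)_{k\ge1}$ be i.i.d. $\{0,1\}$-valued random variables with $\mathbb{P}[\lambda^e_k=0]=\gamma^e$, and let $(u_k)_{k\ge1}$ be i.i.d. $\{0,1\}$-valued random variables with $\mathbb{P}[u_k=0]=\mu$, the two sequences being independent of each other. Let $P^e_0$ be a fixed symmetric positive semidefinite matrix and define recursively, for $k\ge1$, $$P^e_k=\begin{cases}\bar P, & \text{if } (\lambda^e_k,u_k)=(1,1),\\ P_n, & \text{if } (\lambda^e_k,u_k)=(1,0),\\ AP^e_{k-1}A^{\intercal}+Q, & \text{if } \lambda^e_k=0.\end{cases}$$ Then $$\lim_{k\to\infty}\mathbb{E}[P^e_k]=(1-\gamma^e)(1-\mu)\,W^e+\gamma^e S^e+(1-\gamma^e)\mu\,H^e,$$ where $W^e=L(\sqrt{\gamma^e}A,\bar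 P)$, $S^e=L(\sqrt{\gamma^e}A,Q)$ and $H^e=L(\sqrt{\gamma^e}A,P_n)$.
   Context: For a square matrix $T$ with $\rho(T)<1$ and a symmetric matrix $U$, $L(T,U)$ denotes the unique solution $V$ of the discrete-time Lyapunov equation $V=TVT^{\intercal}+U$, equivalently $L(T,U)=\sum_{j=0}^{\infty}T^jU(T^{\intercal})^j$. $P^{OP}=L(A,Q)$ is the open-loop (prediction-only) error covariance of the system $x_{k+1}=Ax_k+w_k$, $\mathrm{Cov}(w_k)=Q$. Here $P^e_k$ models the error covariance of an eavesdropper that receives packets when $\lambda^e_k=1$; a received packet is either the sensor's Kalman estimate (error covariance $\bar P$, when $u_k=1$) or independent noise with covariance $\bar P$ that the eavesdropper mistakes for the estimate (error covariance $P_n$, when $u_k=0$). *)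

From HB Require Import structures.
From mathcomp Require Import all_boot all_order all_algebra.
From mathcomp Require Import all_classical all_reals all_analysis.
From mathcomp Require Import complex.
Set Implicit Arguments. Unset Strict Implicit. Unset Printing Implicit Defensive.
Import Order.TTheory GRing.Theory Num.Theory numFieldNormedType.Exports.
Local Open Scope classical_set_scope.
Local Open Scope ring_scope.

Section Defs.
Variable R : realType.

Definition symmetric n (M : 'M[R]_n) := M^T = M.
Definition posdef n (M : 'M[R]_n) :=
  symmetric M /\ forall x : 'cV[R]_n, x != 0 -> 0 < (x^T *m M *m x) ord0 ord0.
Definition psd n (M : 'M[R]_n) :=
  symmetric M /\ forall x : 'cV[R]_n, 0 <= (x^T *m M *m x) ord0 ord0.

Definition spectral_radius_lt1 n (A : 'M[R]_n) :=
  forall z : R[i], eigenvalue (map_mx (real_complex R) A) z -> `|z| < 1.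

Definition obsv_mx n m (A : 'M[R]_n) (C : 'M[R]_(m, n)) :=
  \mxcol_(i < n) (C *m A ^+ i).
Definition ctrb_mx n p (A : 'M[R]_n) (B : 'M[R]_(n, p)) :=
  \mxrow_(i < n) (A ^+ i *m B).
Definition observable n m (A : 'M[R]_n) (C : 'M[R]_(m, n)) :=
  \rank (obsv_mx A C) = n.
Definition controllable n p (A : 'M[R]_n) (B : 'M[R]_(n, p)) :=
  \rank (ctrb_mx A B) = n.

Definition lyap n (T U : 'M[R]_n) : 'M[R]_n :=
  \matrix_(i, j) limn (series (fun k => (T ^+ k *m U *m (T^T) ^+ k) i j)).

Definition pred_cov n (A Q P : 'M[R]_n) := A *m P *m A^T + Q.
Definition kgain n m (A Q : 'M[R]_n) (C : 'M[R]_(m, n)) (Rn : 'M[R]_m)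
  (P : 'M[R]_n) : 'M[R]_(n, m) :=
  let M := pred_cov A Q P in M *m C^T *m invmx (C *m M *m C^T + Rn).

Definition dare n m (A Q : 'M[R]_n) (C : 'M[R]_(m, n)) (Rn : 'M[R]_m)
  (P : 'M[R]_n) :=
  let M := pred_cov A Q P in
  P = M - M *m C^T *m invmx (C *m M *m C^T + Rn) *m C *m M.

Definition stabilizing n m (A Q : 'M[R]_n) (C : 'M[R]_(m, n)) (Rn : 'M[R]_m)
  (P : 'M[R]_n) :=
  spectral_radius_lt1 ((1%:M - kgain A Q C Rn P *m C) *m A).

(* eavesdropper error covariance recursion; lam k, u k are lambda^e_(k+1),
   u_(k+1) *)
Fixpoint Pe n (T : Type) (A Q Pbar Pn P0 : 'M[R]_n) (lam u : nat -> T -> bool)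
  (k : nat) (w : T) : 'M[R]_n :=
  match k with
  | 0 => P0
  | k'.+1 => if lam k' w then (if u k' w then Pbar else Pn)
             else A *m Pe A Q Pbar Pn P0 lam u k' w *m A^T + Q
  end.

Definition mutually_independent d (T : measurableType d) (P : probability T R)
  (I : eqType) (X : I -> T -> bool) :=
  forall (J : seq I) (B : I -> set bool), uniq J ->
    P (\big[setI/setT]_(j <- J) (X j @^-1` B j))
    = \big[*%E/1%E]_(j <- J) P (X j @^-1` B j).

End Defs.

From HB Require Import structures.
From mathcomp Require Import all_boot all_order all_algebra.
From mathcomp Require Import all_classical all_reals all_analysis.
From mathcomp Require Import complex ring.
Set Implicit Arguments. Unset Strict Implicit. Unset Printing Implicit Defensive.
Import Order.TTheory GRing.Theory Num.Theory numFieldNormedType.Exports.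
Local Open Scope classical_set_scope.
Local Open Scope ring_scope.

(* Splitting on the outcome (lam k, u k), which is independent of the past,
   gives the mean recursion
     E P_(k+1) = (1-g)(1-mu) Pbar + (1-g) mu Pn + g (A (E P_k) A^T + Q),
   a Stein iteration M |-> c + B M B^T with B = sqrt g * A.  Since rho(A) < 1
   the powers of A are bounded (Schur triangularisation, then a diagonal
   scaling making all row sums at most 1), so B^k decays like sqrt g ^ k and
   the iteration converges to L(B, c) from any P0; linearity of L(B, .) splits
   L(B, c) into W^e, S^e and H^e.  Only rho(A) < 1 and the probabilistic
   hypotheses are used. *)

Section EntrywiseNorm.
Variable F : numDomainType.

Definition l1norm m n (M : 'M[F]_(m, n)) := \sum_i \sum_j `|M i j|.

Lemma l1norm_ge0 m n (M : 'M[F]_(m, n)) : 0 <= l1norm M.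
Proof. by apply: sumr_ge0 => i _; apply: sumr_ge0. Qed.

Lemma ler_row_l1norm m n (M : 'M[F]_(m, n)) i : \sum_j `|M i j| <= l1norm M.
Proof.
rewrite /l1norm (bigD1 i) //= lerDl.
by apply: sumr_ge0 => k _; apply: sumr_ge0.
Qed.

Lemma ler_entry_l1norm m n (M : 'M[F]_(m, n)) i j : `|M i j| <= l1norm M.
Proof.
apply: le_trans (ler_row_l1norm M i).
by rewrite (bigD1 j) //= lerDl; apply: sumr_ge0.
Qed.

Lemma l1norm_tr m n (M : 'M[F]_(m, n)) : l1norm M^T = l1norm M.
Proof.
rewrite /l1norm exchange_big; apply: eq_bigr => i _.
by apply: eq_bigr => j _; rewrite mxE.
Qed.

Lemma l1normZ m n a (M : 'M[F]_(m, n)) : l1norm (a *: M) = `|a| * l1norm M.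
Proof.
rewrite /l1norm mulr_sumr; apply: eq_bigr => i _.
by rewrite mulr_sumr; apply: eq_bigr => j _; rewrite mxE normrM.
Qed.

Lemma l1norm_mul m n p (M : 'M[F]_(m, n)) (N : 'M[F]_(n, p)) :
  l1norm (M *m N) <= l1norm M * l1norm N.
Proof.
rewrite /l1norm mulr_suml; apply: ler_sum => i _.
apply: (@le_trans _ _ (\sum_j \sum_k `|M i k| * `|N k j|)).
  apply: ler_sum => j _; rewrite mxE; apply: le_trans (ler_norm_sum _ _ _) _.
  by apply: ler_sum => k _; rewrite normrM.
rewrite exchange_big mulr_suml; apply: ler_sum => k _.
by rewrite -mulr_sumr ler_wpM2l // ler_row_l1norm.
Qed.

Lemma row_sum_exp_le1 n (S : 'M[F]_n) :
  (forall i, \sum_j `|S i j| <= 1) -> forall k i, \sum_j `|(S ^+ k) i j| <= 1.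
Proof.
move=> S_le1; elim=> [|k IHk] i.
  rewrite (bigD1 i) //= big1 => [|j ji]; first by rewrite mxE eqxx normr1 addr0.
  by rewrite mxE eq_sym (negPf ji) normr0.
apply: (@le_trans _ _ (\sum_l `|S i l| * \sum_j `|(S ^+ k) l j|)).
  under [X in _ <= X]eq_bigr do rewrite mulr_sumr.
  rewrite exchange_big /=; apply: ler_sum => j _.
  rewrite exprS -mulmxE mxE; apply: le_trans (ler_norm_sum _ _ _) _.
  by apply: ler_sum => l _; rewrite normrM.
apply: le_trans (S_le1 i); apply: ler_sum => l _.
by rewrite ler_piMr.
Qed.

Definition pow_bounded n (M : 'M[F]_n) :=
  exists K, forall k, l1norm (M ^+ k) <= K.

Lemma row_sum_le1_pow_bounded n (S : 'M[F]_n) :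
  (forall i, \sum_j `|S i j| <= 1) -> pow_bounded S.
Proof.
move=> S_le1; exists n%:R => k.
apply: (@le_trans _ _ (\sum_(i < n) 1)); last by rewrite sumr_const card_ord.
by apply: ler_sum => i _; apply: row_sum_exp_le1.
Qed.

Lemma pow_bounded_conj n (V W M : 'M[F]_n) :
  V *m W = 1%:M -> pow_bounded M -> pow_bounded (V *m M *m W).
Proof.
move=> VW [K M_K]; have WV := mulmx1C VW.
have conjX k : (V *m M *m W) ^+ k = V *m M ^+ k *m W.
  elim: k => [|k IHk]; first by rewrite !expr0 -idmxE mulmx1.
  rewrite exprS IHk -mulmxE !mulmxA -[V *m M *m W *m V]mulmxA WV mulmx1.
  by rewrite -[V *m M *m M ^+ k]mulmxA mulmxE -exprS.
exists (l1norm V * K * l1norm W) => k; rewrite conjX.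
apply: le_trans (l1norm_mul _ _) _; rewrite ler_wpM2r ?l1norm_ge0 //.
by apply: le_trans (l1norm_mul _ _) _; rewrite ler_wpM2l ?l1norm_ge0.
Qed.

End EntrywiseNorm.

Section Triangular.
Variables (F : numFieldType) (n : nat) (T : 'M[F]_n).
Hypotheses (T_trig : is_trig_mx T) (T_diag : forall i, `|T i i| < 1).

Let s i := \sum_j `|T i j|.
Let eps i := (1 - `|T i i|) / (1 + s i).
Let e := \prod_i eps i.

Let s_ge0 i : 0 <= s i. Proof. exact: sumr_ge0. Qed.
Let eps_gt0 i : 0 < eps i.
Proof. by rewrite divr_gt0 ?subr_gt0 // ltr_wpDr. Qed.
Let eps_le1 i : eps i <= 1.
Proof.
rewrite ler_pdivrMr ?ltr_wpDr // mul1r.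
by rewrite lerD // (le_trans _ (s_ge0 i)) // oppr_le0.
Qed.
Let e_gt0 : 0 < e. Proof. exact: prodr_gt0. Qed.
Let e_le1 : e <= 1.
Proof. by apply: prodr_ile1 => j _; rewrite ltW ?eps_le1. Qed.
Let e_le_eps i : e <= eps i.
Proof.
rewrite /e (bigD1 i) //= ger_pMr //.
by apply: prodr_ile1 => j _; rewrite ltW ?eps_le1.
Qed.
Let e_s i : `|T i i| + e * s i <= 1.
Proof.
rewrite -lerBrDl; apply: le_trans (ler_wpM2r (s_ge0 i) (e_le_eps i)) _.
rewrite mulrAC ler_pdivrMr ?ltr_wpDr // ler_wpM2l ?subr_ge0 ?ltW //.
by rewrite ltrDr ltr01.
Qed.

(* Conjugating by diag(e^i) scales the entry (i, j), j < i, by e^(i-j) <= e,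
   so the row sums of S are at most |T i i| + e * s i <= 1. *)
Let D : 'M[F]_n := diag_mx (\row_i e ^+ i).
Let D' : 'M[F]_n := diag_mx (\row_i e ^- i).
Let S := D *m T *m D'.

Let e_neq0 : e != 0. Proof. by rewrite gt_eqF. Qed.

Let D'D : D' *m D = 1%:M.
Proof.
rewrite /D /D' mulmx_diag -diag_const_mx; congr diag_mx; apply/rowP => j.
by rewrite !mxE mulVf // expf_neq0.
Qed.

Let SE i j : S i j = e ^+ i * T i j / e ^+ j.
Proof. by rewrite /S /D /D' mul_mx_diag mul_diag_mx !mxE. Qed.

Let S_off i j : j != i -> `|S i j| <= e * `|T i j|.
Proof.
rewrite SE; case: (ltngtP i j) => [ij _|ji _|/val_inj -> /eqP //].
  by rewrite (is_trig_mxP T_trig i j ij) mulr0 mul0r normr0 mulr0.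
rewrite mulrAC -expfB // normrM ler_wpM2r // normrX (ger0_norm (ltW e_gt0)).
rewrite -[X in _ <= X]expr1; apply: ler_wiXn2l => //; first exact: ltW.
by rewrite subn_gt0.
Qed.

Let S_row i : \sum_j `|S i j| <= 1.
Proof.
rewrite (bigD1 i) //= SE mulrAC divff ?expf_neq0 // mul1r.
apply: le_trans (e_s i); rewrite lerD2l.
apply: (@le_trans _ _ (\sum_(j | j != i) e * `|T i j|)).
  by apply: ler_sum => j; apply: S_off.
rewrite -mulr_sumr ler_wpM2l ?(ltW e_gt0) // /s [X in _ <= X](bigD1 i) //=.
by rewrite lerDr.
Qed.

Lemma trig_pow_bounded : pow_bounded T.
Proof.
have -> : T = D' *m S *m D.
  by rewrite /S !mulmxA D'D mul1mx -mulmxA D'D mulmx1.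
exact: pow_bounded_conj D'D (row_sum_le1_pow_bounded S_row).
Qed.

End Triangular.

Lemma map_mxX (R S : pzRingType) (f : {rmorphism R -> S}) n (A : 'M[R]_n) k :
  map_mx f (A ^+ k) = map_mx f A ^+ k.
Proof.
elim: k => [|k IHk]; first by rewrite !expr0 -!idmxE map_mx1.
by rewrite !exprS -!mulmxE map_mxM IHk.
Qed.

Lemma l1norm_map_complex (R : rcfType) m n (M : 'M[R]_(m, n)) :
  l1norm (map_mx (real_complex R) M) = (l1norm M)%:C%C.
Proof.
rewrite /l1norm rmorph_sum; apply: eq_bigr => i _.
rewrite rmorph_sum; apply: eq_bigr => j _.
by rewrite mxE normc_def /= expr0n addr0 sqrtr_sqr.
Qed.

Lemma spectral_radius_lt1_pow_bounded (R : realType) n (A : 'M[R]_n) :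
  spectral_radius_lt1 A -> pow_bounded A.
Proof.
move=> rhoA; have [n0|n_gt0] := posnP n.
  exists 0 => k; rewrite /l1norm big1 // => i.
  by have := ltn_ord i; rewrite {2}n0.
set Ac := map_mx (real_complex R) A.
have [U U_unitary] := Schur Ac n_gt0.
rewrite /similar_to conjymx //; set U' := (U ^t*)%sesqui.
set T := U *m Ac *m U' => T_trig.
have UU' : U *m U' = 1%:M by apply/unitarymxP.
have T_diag i : `|T i i| < 1.
  apply: rhoA; apply: (@eigenvalue_conjmx _ _ _ U).
  - by rewrite stablemx_unit ?unitarymx_unit.
  - by rewrite row_free_unit unitarymx_unit.
  rewrite conjymx // -/T -topredE /= eigenvalue_root_char char_poly_trig //.
  rewrite rootE horner_prod.
  by apply/prodf_eq0; exists i => //; rewrite hornerXsubC subrr.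
have [K Ac_K] : pow_bounded Ac.
  have -> : Ac = U' *m T *m U.
    by rewrite /T !mulmxA (mulmx1C UU') mul1mx -mulmxA (mulmx1C UU') mulmx1.
  exact: pow_bounded_conj (mulmx1C UU') (trig_pow_bounded T_trig T_diag).
exists (complex.Re K) => k.
have := Ac_K k; rewrite -map_mxX l1norm_map_complex lecE.
by case/andP.
Qed.

Lemma trmxX (R : comPzRingType) n (A : 'M[R]_n) k : (A ^+ k)^T = A^T ^+ k.
Proof.
elim: k => [|k IHk]; first by rewrite !expr0 -!idmxE trmx1.
by rewrite exprSr exprS -!mulmxE trmx_mul IHk.
Qed.

Lemma scalemxX (R : comPzRingType) n (a : R) (A : 'M[R]_n) k :
  (a *: A) ^+ k = a ^+ k *: A ^+ k.
Proof.
elim: k => [|k IHk]; first by rewrite !expr0 scale1r.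
by rewrite !exprS IHk -!mulmxE -scalemxAl -scalemxAr scalerA.
Qed.

Section SteinIteration.
Variables (R : realType) (n : nat) (B : 'M[R]_n) (K r : R).
Hypotheses (r_ge0 : 0 <= r) (r_lt1 : r < 1).
Hypothesis B_K : forall k, l1norm (B ^+ k) <= K * r ^+ k.

Definition lyap_term (U : 'M[R]_n) k := B ^+ k *m U *m B^T ^+ k.

Lemma lyap_term0 U : lyap_term U 0 = U.
Proof. by rewrite /lyap_term !expr0 -idmxE mul1mx mulmx1. Qed.

Lemma lyap_termS U k : lyap_term U k.+1 = B *m lyap_term U k *m B^T.
Proof. by rewrite /lyap_term exprS exprSr -!mulmxE !mulmxA. Qed.

Lemma lyap_term_entry_le U k i j :
  `|lyap_term U k i j| <= K ^+ 2 * l1norm U * (r ^+ 2) ^+ k.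
Proof.
have BkU : l1norm (B ^+ k *m U) <= K * r ^+ k * l1norm U.
  by apply: le_trans (l1norm_mul _ _) _; rewrite ler_wpM2r ?l1norm_ge0.
apply: le_trans (ler_entry_l1norm _ i j) _.
apply: le_trans (l1norm_mul _ _) _; rewrite -trmxX l1norm_tr.
apply: le_trans (ler_pM (l1norm_ge0 _) (l1norm_ge0 _) BkU (B_K k)) _.
suff -> : K ^+ 2 * l1norm U * (r ^+ 2) ^+ k
    = K * r ^+ k * l1norm U * (K * r ^+ k) by [].
by rewrite exprAC; ring.
Qed.

Lemma lyap_series_cvg U i j : cvgn (series (fun k => lyap_term U k i j)).
Proof.
apply: (@normed_cvg _ R^o).
apply: (@series_le_cvg _ _ (geometric (K ^+ 2 * l1norm U) (r ^+ 2))).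
- by move=> k; rewrite normr_ge0.
- move=> k; exact: le_trans (normr_ge0 _) (lyap_term_entry_le U k i j).
- by move=> k; apply: lyap_term_entry_le.
- by apply: is_cvg_geometric_series; rewrite ger0_norm ?exprn_ge0 // expr_lt1.
Qed.

Lemma lyapE U i j : lyap B U i j = limn (series (fun k => lyap_term U k i j)).
Proof. by rewrite mxE. Qed.

Lemma lyapD U V : lyap B (U + V) = lyap B U + lyap B V.
Proof.
apply/matrixP => i j; rewrite [RHS]mxE !lyapE.
rewrite -lim_seriesD; try exact: lyap_series_cvg.
congr (limn (series _)); apply: funext => k.
by rewrite /lyap_term mulmxDr mulmxDl [LHS]mxE.
Qed.

Lemma lyapZ a U : lyap B (a *: U) = a *: lyap B U.
Proof.
apply/matrixP => i j; rewrite [RHS]mxE !lyapE.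
rewrite -[_ * _]/(a *: _ : R^o) -lim_seriesZ; last exact: lyap_series_cvg.
congr (limn (series _)); apply: funext => k.
by rewrite /lyap_term -scalemxAr -scalemxAl [LHS]mxE.
Qed.

Fixpoint stein_iter (c P0 : 'M[R]_n) k :=
  if k is k'.+1 then c + B *m stein_iter c P0 k' *m B^T else P0.

Lemma stein_iterE c P0 k :
  stein_iter c P0 k = lyap_term P0 k + \sum_(l < k) lyap_term c l.
Proof.
elim: k => [|k IHk]; first by rewrite big_ord0 addr0 lyap_term0.
rewrite /= IHk big_ord_recl mulmxDr mulmxDl mulmx_sumr mulmx_suml -lyap_termS.
rewrite lyap_term0 addrCA; congr (_ + (_ + _)).
by apply: eq_bigr => l _; rewrite lyap_termS.
Qed.

Lemma stein_iter_cvg c P0 i j :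
  stein_iter c P0 k i j @[k --> \oo] --> lyap B c i j.
Proof.
have -> : (fun k => stein_iter c P0 k i j) =
    (fun k => lyap_term P0 k i j) + series (fun l => lyap_term c l i j).
  by apply: funext => k; rewrite stein_iterE mxE summxE seriesEord.
rewrite lyapE -[X in _ --> X]add0r; apply: cvgD; last exact: lyap_series_cvg.
by apply: cvg_series_cvg_0; apply: lyap_series_cvg.
Qed.

End SteinIteration.

Section BoundedExpectation.
Variables (R : realType) (d : measure_display) (T : measurableType d).
Variable P : probability T R.

Definition bounded_measurable (f : T -> R) :=
  measurable_fun setT f /\ exists2 M, 0 <= M & forall w, `|f w| <= M.

Lemma bounded_measurable_cst c : bounded_measurable (fun=> c).
Proof. by split; [exact: measurable_cst | exists `|c|]. Qed.

Lemma bounded_measurable_indic S : measurable S -> bounded_measurable \1_S.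
Proof.
move=> mS; split; first exact: measurable_realfun.measurable_indic.
by exists 1 => // w; rewrite indicE; case: (_ \in _); rewrite ?normr1 ?normr0.
Qed.

Lemma bounded_measurableD f g : bounded_measurable f -> bounded_measurable g ->
  bounded_measurable (fun w => f w + g w).
Proof.
move=> [mf [Mf Mf0 f_le]] [mg [Mg Mg0 g_le]].
split; first exact: measurable_realfun.measurable_funD.
exists (Mf + Mg) => [|w]; first exact: addr_ge0.
by apply: le_trans (ler_normD _ _) _; apply: lerD.
Qed.

Lemma bounded_measurableM f g : bounded_measurable f -> bounded_measurable g ->
  bounded_measurable (fun w => f w * g w).
Proof.
move=> [mf [Mf Mf0 f_le]] [mg [Mg Mg0 g_le]].
split; first exact: measurable_realfun.measurable_funM.
by exists (Mf * Mg) => [|w]; rewrite ?mulr_ge0 // normrM ler_pM.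
Qed.

Lemma bounded_measurable_sum (I : Type) (r : seq I) (F : I -> T -> R) :
  (forall i, bounded_measurable (F i)) ->
  bounded_measurable (fun w => \sum_(i <- r) F i w).
Proof.
move=> bF; elim: r => [|i r IHr].
  by rewrite (eq_fun (fun w => big_nil _ _ _ _)); exact: bounded_measurable_cst.
by rewrite (eq_fun (fun w => big_cons _ _ _ _ _ _)); exact: bounded_measurableD.
Qed.

Lemma bounded_measurable_Lfun f : bounded_measurable f -> f \in Lfun P 1.
Proof.
move=> [mf [M M0 f_le]]; apply/Lfun1_integrable.
apply: measurable_bounded_integrable => //.
  by apply: le_lt_trans (probability_le1 P measurableT) _; rewrite ltry.
exists M; split; first exact: num_real.
by move=> M' M_lt w _; exact: le_trans (f_le w) (ltW M_lt).
Qed.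

Definition expectR (f : T -> R) := fine 'E_P[f]%E.

Lemma expectRE f : bounded_measurable f -> 'E_P[f]%E = (expectR f)%:E.
Proof. by move=> /bounded_measurable_Lfun/expectation_fin_num/fineK. Qed.

Lemma expectRD f g : bounded_measurable f -> bounded_measurable g ->
  expectR (fun w => f w + g w) = expectR f + expectR g.
Proof.
move=> bf bg; rewrite /expectR (expectationD (X := f) (Y := g)).
  by rewrite fineD // expectation_fin_num // bounded_measurable_Lfun.
all: exact: bounded_measurable_Lfun.
Qed.

Lemma expectRZ k f : bounded_measurable f ->
  expectR (fun w => k * f w) = k * expectR f.
Proof.
move=> bf; rewrite /expectR (eq_fun (fun w => mulrC k (f w))).
rewrite (expectationZl k (bounded_measurable_Lfun bf)) fineM //.
by rewrite expectation_fin_num // bounded_measurable_Lfun.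
Qed.

Lemma expectR_sum (I : Type) (r : seq I) (F : I -> T -> R) :
  (forall i, bounded_measurable (F i)) ->
  expectR (fun w => \sum_(i <- r) F i w) = \sum_(i <- r) expectR (F i).
Proof.
move=> bF; elim: r => [|i r IHr].
  by rewrite big_nil (eq_fun (fun w => big_nil _ _ _ _)) /expectR expectation_cst.
rewrite big_cons (eq_fun (fun w => big_cons _ _ _ _ _ _)) -IHr.
by rewrite expectRD //; exact: bounded_measurable_sum.
Qed.

Lemma expectR_indic S : measurable S -> expectR \1_S = fine (P S).
Proof. by move=> mS; rewrite /expectR expectation_indic. Qed.

Definition bounded_measurable_mx m p (X : T -> 'M[R]_(m, p)) :=
  forall i j, bounded_measurable (fun w => X w i j).

Definition mx_expectR m p (X : T -> 'M[R]_(m, p)) : 'M[R]_(m, p) :=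
  \matrix_(i, j) expectR (fun w => X w i j).

Lemma bounded_measurable_mxD m p (X Y : T -> 'M[R]_(m, p)) :
  bounded_measurable_mx X -> bounded_measurable_mx Y ->
  bounded_measurable_mx (fun w => X w + Y w).
Proof.
move=> bX bY i j; under eq_fun do rewrite mxE.
exact: bounded_measurableD.
Qed.

Lemma bounded_measurable_mx_indicZ m p S (X : T -> 'M[R]_(m, p)) :
  measurable S -> bounded_measurable_mx X ->
  bounded_measurable_mx (fun w => \1_S w *: X w).
Proof.
move=> mS bX i j; under eq_fun do rewrite mxE.
exact: bounded_measurableM (bounded_measurable_indic mS) (bX i j).
Qed.

Lemma bounded_measurable_mx_cst m p (M : 'M[R]_(m, p)) :
  bounded_measurable_mx (fun=> M).
Proof. by move=> i j; exact: bounded_measurable_cst. Qed.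

Lemma bounded_measurable_mull l m p (U : 'M[R]_(l, m)) (X : T -> 'M[R]_(m, p)) :
  bounded_measurable_mx X -> bounded_measurable_mx (fun w => U *m X w).
Proof.
move=> bX i j; under eq_fun do rewrite mxE.
apply: bounded_measurable_sum => k.
exact: bounded_measurableM (bounded_measurable_cst _) (bX k j).
Qed.

Lemma bounded_measurable_mulr l m p (X : T -> 'M[R]_(l, m)) (V : 'M[R]_(m, p)) :
  bounded_measurable_mx X -> bounded_measurable_mx (fun w => X w *m V).
Proof.
move=> bX i j; under eq_fun do rewrite mxE.
apply: bounded_measurable_sum => k.
exact: bounded_measurableM (bX i k) (bounded_measurable_cst _).
Qed.

Lemma mx_expectRD m p (X Y : T -> 'M[R]_(m, p)) :
  bounded_measurable_mx X -> bounded_measurable_mx Y ->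
  mx_expectR (fun w => X w + Y w) = mx_expectR X + mx_expectR Y.
Proof.
move=> bX bY; apply/matrixP => i j; rewrite !mxE -expectRD //.
by under eq_fun do rewrite mxE.
Qed.

Lemma mx_expectR_indicZ m p S (M : 'M[R]_(m, p)) : measurable S ->
  mx_expectR (fun w => \1_S w *: M) = fine (P S) *: M.
Proof.
move=> mS; apply/matrixP => i j; rewrite !mxE -expectR_indic // mulrC -expectRZ.
  by congr expectR; apply: funext => w; rewrite mxE mulrC.
exact: bounded_measurable_indic.
Qed.

Lemma mx_expectR_mull l m p (U : 'M[R]_(l, m)) (X : T -> 'M[R]_(m, p)) :
  bounded_measurable_mx X -> mx_expectR (fun w => U *m X w) = U *m mx_expectR X.
Proof.
move=> bX; apply/matrixP => i j; rewrite !mxE; under eq_fun do rewrite mxE.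
rewrite expectR_sum => [|k]; last first.
  exact: bounded_measurableM (bounded_measurable_cst _) (bX k j).
by apply: eq_bigr => k _; rewrite expectRZ // mxE.
Qed.

Lemma mx_expectR_mulr l m p (X : T -> 'M[R]_(l, m)) (V : 'M[R]_(m, p)) :
  bounded_measurable_mx X -> mx_expectR (fun w => X w *m V) = mx_expectR X *m V.
Proof.
move=> bX; apply/matrixP => i j; rewrite !mxE; under eq_fun do rewrite mxE.
rewrite expectR_sum => [|k]; last first.
  exact: bounded_measurableM (bX i k) (bounded_measurable_cst _).
apply: eq_bigr => k _; rewrite mxE mulrC -expectRZ //.
by congr expectR; apply: funext => w; rewrite mulrC.
Qed.

End BoundedExpectation.

Section EavesdropperMean.
Variables (R : realType) (d : measure_display) (T : measurableType d).
Variable P : probability T R.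
Variables (lam u : nat -> T -> bool) (g mu : R).
Hypotheses (lam_meas : forall k, measurable_fun setT (lam k))
  (u_meas : forall k, measurable_fun setT (u k)).
Hypotheses (lam_false : forall k, P (lam k @^-1` [set false]) = g%:E)
  (u_false : forall k, P (u k @^-1` [set false]) = mu%:E).

Let X (i : nat + nat) := match i with inl k => lam k | inr k => u k end.
Let time (i : nat + nat) := match i with inl k => k | inr k => k end.
Hypothesis X_indep : mutually_independent P X.

Local Notation pr S := (fine (P S)).

Let X_meas i s : measurable (X i @^-1` s).
Proof.
rewrite -[_ @^-1` _]setTI.
by case: i => k; [exact: lam_meas | exact: u_meas].
Qed.

Let pr_true (f : T -> bool) p : measurable (f @^-1` [set false]) ->
  P (f @^-1` [set false]) = p%:E -> pr (f @^-1` [set true]) = 1 - p.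
Proof.
move=> mf fp; have -> : f @^-1` [set true] = ~` (f @^-1` [set false]).
  by apply/seteqP; split => w /=; case: (f w).
by rewrite probability_setC // fp.
Qed.

Let cyl J B := \big[setI/setT]_(j <- J) (X j @^-1` B j).

Let cyl_meas J B : measurable (cyl J B).
Proof. by apply: bigsetI_measurable => j _; apply: X_meas. Qed.

Let setI_cyl i s J B : i \notin J ->
  X i @^-1` s `&` cyl J B = cyl (i :: J) (fun j => if j == i then s else B j).
Proof.
move=> iJ; rewrite /cyl big_cons eqxx; congr (_ `&` _).
rewrite big_seq [RHS]big_seq; apply: eq_bigr => j jJ.
by have /negPf -> : j != i by apply: contraNneq iJ => <-.
Qed.

Let pr_setI_cyl i s J B : uniq J -> i \notin J ->
  pr (X i @^-1` s `&` cyl J B) = pr (X i @^-1` s) * pr (cyl J B).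
Proof.
move=> uJ iJ.
have -> : P (X i @^-1` s `&` cyl J B) = (P (X i @^-1` s) * P (cyl J B))%E.
  rewrite setI_cyl // /cyl X_indep /= ?iJ // big_cons eqxx X_indep //.
  congr (_ * _)%E; rewrite big_seq [RHS]big_seq; apply: eq_bigr => j jJ.
  by have /negPf -> : j != i by apply: contraNneq iJ => <-.
by rewrite fineM // fin_num_measure.
Qed.

Let pr_lam_u_cyl k b c J B : uniq J -> inl k \notin J -> inr k \notin J ->
  pr (lam k @^-1` [set b] `&` (u k @^-1` [set c] `&` cyl J B))
  = pr (lam k @^-1` [set b]) * (pr (u k @^-1` [set c]) * pr (cyl J B)).
Proof.
move=> uJ lJ rJ; rewrite (setI_cyl (i := inr k)) //.
rewrite (pr_setI_cyl (i := inl k)) /=; last 2 first.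
- by rewrite rJ.
- by rewrite inE negb_or lJ.
by rewrite -(setI_cyl (i := inr k)) // (pr_setI_cyl (i := inr k)).
Qed.

Variables (n : nat) (A Q Pbar Pn P0 : 'M[R]_n).

Let Pk k := Pe A Q Pbar Pn P0 lam u k.

Let indic_preimage1 (f : T -> bool) b w :
  \1_(f @^-1` [set b]) w = (f w == b)%:R :> R.
Proof.
rewrite indicE; have [fwb|fwb] := eqVneq (f w) b; first by rewrite mem_set.
by rewrite memNset // => /eqP; rewrite (negPf fwb).
Qed.

Let Pe_step_indic k S w :
  \1_S w *: Pk k.+1 w =
    \1_(lam k @^-1` [set true] `&` (u k @^-1` [set true] `&` S)) w *: Pbar
  + \1_(lam k @^-1` [set true] `&` (u k @^-1` [set false] `&` S)) w *: Pn
  + A *m (\1_(lam k @^-1` [set false] `&` S) w *: Pk k w) *m A^T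
  + \1_(lam k @^-1` [set false] `&` S) w *: Q.
Proof.
rewrite !indicI /= !indic_preimage1 /Pk /=.
case: (lam k w); case: (u k w);
  rewrite ?mul1r ?mul0r ?scale0r ?mulmx0 ?mul0mx ?add0r ?addr0 //.
all: by rewrite -scalemxAr -scalemxAl -scalerDr.
Qed.

Let lam_pre_meas k b : measurable (lam k @^-1` [set b]).
Proof. exact: (X_meas (inl k)). Qed.

Let u_pre_meas k b : measurable (u k @^-1` [set b]).
Proof. exact: (X_meas (inr k)). Qed.

Local Ltac bounded_mx :=
  repeat first [ assumption | apply: bounded_measurable_mxD
    | apply: bounded_measurable_mulr | apply: bounded_measurable_mull
    | apply: bounded_measurable_mx_indicZ | exact: bounded_measurable_mx_cst
    | apply: measurableI | exact: lam_pre_meas | exact: u_pre_meas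
    | exact: cyl_meas ].

Let Pk_bounded k : bounded_measurable_mx (Pk k).
Proof.
elim: k => [|k IHk]; first exact: bounded_measurable_mx_cst.
have -> : Pk k.+1 = fun w => \1_setT w *: Pk k.+1 w.
  by apply: funext => w; rewrite indicT scale1r.
rewrite (eq_fun (Pe_step_indic k setT)).
by bounded_mx.
Qed.

Variable M : nat -> 'M[R]_n.
Hypothesis M0 : M 0 = P0.
Hypothesis MS : forall k, M k.+1 =
  (1 - g) * (1 - mu) *: Pbar + (1 - g) * mu *: Pn + g *: (A *m M k *m A^T + Q).

(* Strengthening the mean recursion to all cylinder events of later times is
   what lets the independence of (lam k, u k) from Pk k enter without
   conditional expectations. *)
Let mx_expectR_Pe_cyl k J B : uniq J -> {in J, forall j, (k <= time j)%N} ->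
  mx_expectR P (fun w => \1_(cyl J B) w *: Pk k w) = pr (cyl J B) *: M k.
Proof.
elim: k J B => [|k IHk] J B uJ J_ge; first by rewrite M0 mx_expectR_indicZ.
have lJ : inl k \notin J by apply/negP => /J_ge; rewrite ltnn.
have rJ : inr k \notin J by apply/negP => /J_ge; rewrite ltnn.
set S := cyl J B; set S0 := lam k @^-1` [set false] `&` S.
have bPk := Pk_bounded k.
have E_S0 : mx_expectR P (fun w => \1_S0 w *: Pk k w) = pr S0 *: M k.
  rewrite /S0 /S (setI_cyl (i := inl k)) // IHk -?(setI_cyl (i := inl k)) //.
    by rewrite /= lJ.
  by move=> j; rewrite inE => /predU1P[-> //|/J_ge/ltnW].
have pr_S0 : pr S0 = g * pr S by rewrite (pr_setI_cyl (i := inl k)) // lam_false.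
have pr_l1 : pr (lam k @^-1` [set true]) = 1 - g.
  exact: pr_true (lam_pre_meas _ _) (lam_false k).
have pr_u1 : pr (u k @^-1` [set true]) = 1 - mu.
  exact: pr_true (u_pre_meas _ _) (u_false k).
have pr_u0 : pr (u k @^-1` [set false]) = mu by rewrite u_false.
rewrite (eq_fun (Pe_step_indic k S)) !mx_expectRD; try by bounded_mx.
rewrite !mx_expectR_indicZ; try by bounded_mx.
rewrite mx_expectR_mulr; last by bounded_mx.
rewrite mx_expectR_mull; last by bounded_mx.
rewrite E_S0 !pr_lam_u_cyl // pr_l1 pr_u1 pr_u0 pr_S0 MS.
rewrite -scalemxAr -scalemxAl !scalerDr !scalerA [in RHS]addrA -/S.
by congr (_ + _ + _ + _); congr (_ *: _); ring.
Qed.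

Lemma expectation_Pe k i j : 'E_P[fun w => Pk k w i j]%E = (M k i j)%:E.
Proof.
rewrite (expectRE P (Pk_bounded k i j)); congr EFin.
have J_ge : {in [::], forall j, (k <= time j)%N} by [].
move: (mx_expectR_Pe_cyl (J := [::]) (fun=> setT) isT J_ge) => /matrixP/(_ i j).
rewrite /cyl big_nil probability_setT scale1r !mxE => <-.
by congr expectR; apply: funext => w; rewrite indicT mxE mul1r.
Qed.

End EavesdropperMean.

Unset Implicit Arguments.

Theorem lemma3 (R : realType) (n m : nat)
  (A : 'M[R]_n) (C : 'M[R]_(m, n)) (Q Qh : 'M[R]_n) (Rn : 'M[R]_m)
  (Pbar P0 : 'M[R]_n) (gamma mu : R)
  (d : measure_display) (T : measurableType d) (P : probability T R)
  (lam u : nat -> T -> bool) :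
  spectral_radius_lt1 A ->
  posdef Q -> posdef Rn ->
  observable A C ->
  (* Qh = Q^{1/2}, the symmetric PSD square root of Q *)
  psd Qh -> Qh *m Qh = Q -> controllable A Qh ->
  posdef Pbar -> dare A Q C Rn Pbar -> stabilizing A Q C Rn Pbar ->
  0 < gamma < 1 -> 0 < mu < 1 ->
  (forall k, measurable_fun setT (lam k)) ->
  (forall k, measurable_fun setT (u k)) ->
  (forall k, P (lam k @^-1` [set false]) = gamma%:E) ->
  (forall k, P (u k @^-1` [set false]) = mu%:E) ->
  mutually_independent P
    (fun i : nat + nat => match i with inl k => lam k | inr k => u k end) ->
  psd P0 ->
  let Pn := lyap A Q + Pbar in
  let We := lyap (Num.sqrt gamma *: A) Pbar in
  let Se := lyap (Num.sqrt gamma *: A) Q in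
  let He := lyap (Num.sqrt gamma *: A) Pn in
  let Lim := (1 - gamma) * (1 - mu) *: We + gamma *: Se
             + (1 - gamma) * mu *: He in
  forall i j : 'I_n,
    ((fun k => 'E_P[fun w => Pe A Q Pbar Pn P0 lam u k w i j]) @ \oo
      --> (Lim i j)%:E)%E.
Proof.
move=> rhoA _ _ _ _ _ _ _ _ _ /andP[g_gt0 g_lt1] _ lam_meas u_meas
  lam_false u_false X_indep _ Pn We Se He Lim i j; clearbody Pn.
have [K A_K] := spectral_radius_lt1_pow_bounded rhoA.
set s := Num.sqrt gamma; set B := s *: A.
have s_ge0 : 0 <= s := sqrtr_ge0 gamma.
have s_lt1 : s < 1 by rewrite /s -sqrtr1 ltr_sqrt.
have B_K k : l1norm (B ^+ k) <= K * s ^+ k.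
  rewrite /B scalemxX l1normZ ger0_norm ?exprn_ge0 // mulrC.
  by rewrite ler_wpM2r ?exprn_ge0.
have B_conj M : B *m M *m B^T = gamma *: (A *m M *m A^T).
  rewrite /B linearZ /= -!scalemxAl -scalemxAr scalerA -expr2 sqr_sqrtr //.
  exact: ltW.
set c := (1 - gamma) * (1 - mu) *: Pbar + (1 - gamma) * mu *: Pn + gamma *: Q.
have E_Pe k : 'E_P[fun w => Pe A Q Pbar Pn P0 lam u k w i j]%E
    = (stein_iter B c P0 k i j)%:E.
  apply: (expectation_Pe lam_meas u_meas lam_false u_false X_indep) => // l.
  by rewrite /= B_conj scalerDr [_ + gamma *: Q]addrC addrA.
rewrite (eq_fun E_Pe); apply: cvg_EFin; first exact: nearW.
have -> : Lim i j = lyap B c i j.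
  by rewrite /c !(lyapD s_ge0 s_lt1 B_K) !(lyapZ s_ge0 s_lt1 B_K) /Lim addrAC.
exact: (stein_iter_cvg s_ge0 s_lt1 B_K P0 (c := c) (i := i) (j := j)).
Qed.
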